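(* Let $G$ be a finite digraph which is a directed cycle, let $\varphi^L,\varphi^U:G\to[0,1]$ with $\varphi^L<\varphi^U$, and let $\varepsilon>0$. Then there exist a digraph $\tilde G$ which is a directed cycle, a surjective edge-preserving homomorphism $\Psi:\tilde G\to G$, and $\tilde\varphi^L,\tilde\varphi^U:\tilde G\to[0,1]$ such that: (a) if $\tilde g\in\tilde G$ and $\Psi(\tilde g)=g$, then $\varphi^L(g)\le\tilde\varphi^L(\tilde g)<\tilde\varphi^U(\tilde g)\le\varphi^U(g)$; (b) for every $g\in G$ there is $\tilde g\in\tilde G$ with $\Psi(\tilde g)=g$, $\tilde\varphi^L(\tilde g)=\varphi^L(g)$ and $\tilde\varphi^U(\tilde g)=\varphi^U(g)$; (c) for every $g\in G$ and all $a<b$ with $\varphi^L(g)\le a<b\le\varphi^U(g)$ there is $\tilde g\in\tilde G$ with $\Psi(\tilde g)=g$, $|a-\tilde\varphi^L(\tilde g)|<\varepsilon$ and $|b-\tilde\varphi^U(\tilde g)|<\varepsilon$; (d) whenever $\overrightarrow{\tilde g_1\tilde g_2}$ is an edge of $\tilde G$ with $\Psi(\tilde g_i)=g_i$, the increasing affine map $\alpha_1$ of $[\varphi^L(g_1),\varphi^U(g_1)]$ onto $[\varphi^L(g_2),\varphi^U(g_2)]$ and the increasing affine map $\alpha_2$ of $[\tilde\varphi^L(\tilde g_1),\tilde\varphi^U(\tilde g_1)]$ onto $[\tilde\varphi^L(\tilde g_2),\tilde\varphi^U(\tilde g_2)]$ are $\varepsilon$-close on their common domain, and $\alpha_1^{-1}$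 and $\alpha_2^{-1}$ are $\varepsilon$-close on their common domain. Moreover, there exists $m_0\in\mathbb{N}$ such that for every $m\ge m_0$ the digraph $\tilde G$ can be chosen with $|\tilde G|=m|G|$.
   Context: A digraph is a directed cycle if its vertices can be enumerated $c_1,\dots,c_k$ so that its edges are exactly $\overrightarrow{c_ic_{i+1}}$ ($1\le i<k$) and $\overrightarrow{c_kc_1}$. An edge-preserving homomorphism maps each edge $\overrightarrow{uv}$ to an edge $\overrightarrow{\Psi(u)\Psi(v)}$. *)

From HB Require Import structures.
From mathcomp Require Import all_boot all_order all_algebra.
From mathcomp Require Import reals.
Set Implicit Arguments. Unset Strict Implicit. Unset Printing Implicit Defensive.
Import Order.TTheory GRing.Theory Num.Theory.
Local Open Scope ring_scope.

Definition is_dcycle (T : finType) (e : rel T) : Prop :=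
  exists k : nat, exists c : 'I_k -> T,
    (0 < k)%N /\ bijective c /\
    forall i j : 'I_k, e (c i) (c j) = (val j == (val i).+1 %% k)%N.

Definition edge_hom (T' T : finType) (e' : rel T') (e : rel T) (f : T' -> T) :=
  forall x y, e' x y -> e (f x) (f y).

Definition affmap (R : realType) (l1 u1 l2 u2 : R) (x : R) : R :=
  l2 + (x - l1) * (u2 - l2) / (u1 - l1).

Definition close_on (R : realType) (eps : R) (f g : R -> R) (l1 u1 l2 u2 : R) :=
  forall x, l1 <= x <= u1 -> l2 <= x <= u2 -> `|f x - g x| < eps.

Definition in01 (R : realType) (T : Type) (phi : T -> R) :=
  forall t, 0 <= phi t <= 1.

Definition lift_props (R : realType) (T : finType) (e : rel T)
  (phiL phiU : T -> R) (eps : R)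
  (T' : finType) (e' : rel T') (Psi : T' -> T) (phiL' phiU' : T' -> R) : Prop :=
  (is_dcycle e' /\ (forall g : T, exists t : T', Psi t = g) /\ edge_hom e' e Psi /\ in01 phiL' /\ in01 phiU' /\
   (forall t : T', phiL (Psi t) <= phiL' t /\ phiL' t < phiU' t /\
                   phiU' t <= phiU (Psi t)) /\
   (forall g : T, exists t : T', Psi t = g /\ phiL' t = phiL g /\ phiU' t = phiU g) /\
   (forall (g : T) (a b : R), phiL g <= a -> a < b -> b <= phiU g ->
      exists t : T', Psi t = g /\ `|a - phiL' t| < eps /\ `|b - phiU' t| < eps)
   /\
   (forall t1 t2 : T', e' t1 t2 ->
      let g1 := Psi t1 in let g2 := Psi t2 in
      close_on eps (affmap (phiL g1) (phiU g1) (phiL g2) (phiU g2))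
                   (affmap (phiL' t1) (phiU' t1) (phiL' t2) (phiU' t2))
                   (phiL g1) (phiU g1) (phiL' t1) (phiU' t1) /\
      close_on eps (affmap (phiL g2) (phiU g2) (phiL g1) (phiU g1))
                   (affmap (phiL' t2) (phiU' t2) (phiL' t1) (phiU' t1))
                   (phiL g2) (phiU g2) (phiL' t2) (phiU' t2))).

From HB Require Import structures.
From mathcomp Require Import all_boot all_order all_algebra.
From mathcomp Require Import reals.
From mathcomp Require Import ring lra zify.
Set Implicit Arguments. Unset Strict Implicit. Unset Printing Implicit Defensive.
Import Order.TTheory GRing.Theory Num.Theory.

(* Pick n with 1/n < eps.  The lift is a cycle winding N > (2n)^2 times around G;
   on its r-th winding each vertex g carries the subinterval of [phiL g, phiU g]
   with relative endpoints lo_r/n < hi_r/n, where r |-> (lo_r, hi_r) is a closed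
   walk through all integer pairs 0 <= lo < hi <= n that starts at (0, n), moves
   each coordinate by at most 1 per step, and is frozen at (0, n) after (2n)^2
   steps.  The first winding gives (b); since every grid pair occurs, (c) holds
   with error at most 1/n; along an edge both relative endpoints move by at most
   1/n, and affine maps between subintervals whose relative endpoints are that
   close are eps-close, which gives (d). *)

Definition within1 (a b : nat) := (a <= b.+1) && (b <= a.+1).

Lemma within1_refl a : within1 a a.
Proof. by rewrite /within1 !leqnSn. Qed.

Lemma ltn_mul_add r i k N : r < N -> i < k -> r * k + i < N * k.
Proof.
move=> lt_rN lt_ik; apply: (@leq_trans (r.+1 * k)); last by rewrite leq_mul2r lt_rN orbT.
by rewrite mulSn addnC ltn_add2r.
Qed.

Section Walk.

Variable n : nat.
Hypothesis n_gt0 : 0 < n.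

Let n2_gt0 : 0 < 2 * n. Proof. by rewrite muln_gt0. Qed.

Definition tri (r : nat) := let x := r %% (2 * n) in minn x (2 * n - x).

Definition walk_lo (r : nat) := minn n.-1 (tri (r %/ (2 * n))).
Definition walk_hi (r : nat) := maxn (walk_lo r).+1 (n - tri r).
Definition walk_len := (2 * n) * (2 * n).

Lemma tri_step r : within1 (tri r) (tri r.+1).
Proof.
have lt_r := ltn_pmod r n2_gt0.
rewrite /within1 /tri modnS; case: ifP => [dvd_r | _]; last by lia.
suff : (r %% (2 * n)).+1 = 2 * n by lia.
apply/eqP; rewrite eqn_leq lt_r leqNgt; apply/negP => lt_r1.
by move: dvd_r; rewrite /dvdn -addn1 -modnDml addn1 modn_small.
Qed.

Lemma tri_id r : r <= n -> tri r = r.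
Proof. by move=> le_rn; rewrite /tri modn_small; lia. Qed.

Lemma tri_dvd r : 2 * n %| r -> tri r = 0.
Proof. by rewrite /tri => /eqP->; rewrite min0n. Qed.

Lemma walk_lo_step r : within1 (walk_lo r) (walk_lo r.+1).
Proof.
have := tri_step (r %/ (2 * n)).
rewrite /within1 /walk_lo divnS //.
by case: (_ %| _); rewrite ?add1n ?add0n; lia.
Qed.

Lemma walk_hi_step r : within1 (walk_hi r) (walk_hi r.+1).
Proof. by have := walk_lo_step r; have := tri_step r; rewrite /within1 /walk_hi; lia. Qed.

Lemma walk_lo_lt_hi r : walk_lo r < walk_hi r.
Proof. exact: leq_maxl. Qed.

Lemma walk_hi_le r : walk_hi r <= n.
Proof. by rewrite /walk_hi /walk_lo; lia. Qed.

Lemma walk_start r : walk_len %| r -> walk_lo r = 0 /\ walk_hi r = n.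
Proof.
move=> /dvdnP[q ->].
rewrite /walk_hi /walk_lo /walk_len (mulnA q) mulnK // !tri_dvd ?(dvdn_mull _ (dvdnn _)) //.
by rewrite minn0 subn0; split => //; apply/maxn_idPr.
Qed.

Lemma walk_onto I J : I < J <= n ->
  exists2 r, r < walk_len & walk_lo r = I /\ walk_hi r = J.
Proof.
move=> /andP[lt_IJ le_Jn]; exists (I * (2 * n) + (n - J)).
  by rewrite /walk_len; nia.
have div_r : (I * (2 * n) + (n - J)) %/ (2 * n) = I.
  by rewrite divnMDl ?divn_small; lia.
have lo_r : walk_lo (I * (2 * n) + (n - J)) = I.
  by rewrite /walk_lo div_r tri_id; lia.
have tri_r : tri (I * (2 * n) + (n - J)) = n - J.
  by rewrite -[RHS]tri_id ?leq_subr // /tri modnMDl.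
by rewrite /walk_hi lo_r tri_r subKn //; split => //; apply/maxn_idPr.
Qed.

End Walk.

Lemma within1_clamp_cycle (f : nat -> nat) (k N M x : nat) :
  0 < k -> M < N -> (forall r, within1 (f r) (f r.+1)) -> f M = f 0 ->
  x < N * k -> within1 (f (minn (x %/ k) M)) (f (minn (x.+1 %% (N * k) %/ k) M)).
Proof.
move=> k_gt0 lt_MN f_step fM0 lt_x.
have [lt_x1 | eq_x1] : x.+1 < N * k \/ x.+1 = N * k by lia.
  rewrite modn_small //.
  case: (leqP M (x %/ k)) => [le_M | lt_M].
    have -> : minn (x.+1 %/ k) M = M by rewrite divnS; lia.
    exact: within1_refl.
  rewrite divnS //; case: (_ %| _); rewrite ?add1n ?add0n.
    by have -> : minn (x %/ k).+1 M = (x %/ k).+1 by lia.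
  rewrite (_ : minn (x %/ k) M = x %/ k) ?within1_refl //; lia.
have : M <= x %/ k by rewrite leq_divRL //; nia.
by rewrite eq_x1 modnn div0n min0n => /minn_idPr->; rewrite fM0 within1_refl.
Qed.

Local Open Scope ring_scope.

Section Interpolation.

Variable R : realFieldType.
Implicit Types L U s t x y eps : R.

Definition lerp L U s := L + s * (U - L).

Lemma lerp0 L U : lerp L U 0 = L.
Proof. by rewrite /lerp mul0r addr0. Qed.

Lemma lerp1 L U : lerp L U 1 = U.
Proof. by rewrite /lerp mul1r addrC subrK. Qed.

Lemma lerp_itv L U s t : L < U -> 0 <= s -> s < t -> t <= 1 ->
  [/\ L <= lerp L U s, lerp L U s < lerp L U t & lerp L U t <= U].
Proof. by rewrite /lerp => *; split; nra. Qed.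

Lemma distr_lerp L U s t : L <= U -> `|lerp L U s - lerp L U t| = `|s - t| * (U - L).
Proof.
move=> le_LU; rewrite /lerp opprD addrACA subrr add0r -mulrBl normrM.
by rewrite (ger0_norm (_ : 0 <= U - L)) // subr_ge0.
Qed.

Lemma convex_norm_lt (lam a b eps : R) : 0 <= lam <= 1 ->
  `|a| < eps -> `|b| < eps -> `|(1 - lam) * a + lam * b| < eps.
Proof.
move=> /andP[lam_ge0 lam_le1] a_lt b_lt.
have lam'_ge0 : 0 <= 1 - lam by rewrite subr_ge0.
apply: le_lt_trans (ler_normD _ _) _.
rewrite !normrM (ger0_norm lam_ge0) (ger0_norm lam'_ge0).
case: (leP `|a| `|b|) => ab.
  have : (1 - lam) * `|a| <= (1 - lam) * `|b| by rewrite ler_wpM2l.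
  lra.
have : lam * `|b| <= lam * `|a| by rewrite ler_wpM2l // ltW.
lra.
Qed.

Lemma dist_lt_of_scaled (n : nat) eps x y : (0 < n)%N -> n%:R^-1 < eps ->
  `|x * n%:R - y * n%:R| <= 1 -> `|x - y| < eps.
Proof.
move=> n_gt0 lt_eps; rewrite -mulrBl normrM (ger0_norm (ler0n _ _)) => le1.
by apply: le_lt_trans lt_eps; rewrite -[_^-1]mul1r ler_pdivlMr ?ltr0n.
Qed.

End Interpolation.

Lemma grid_pair_approx (R : archiRealFieldType) (n : nat) (x y : R) :
  (0 < n)%N -> 0 <= x -> x < y -> y <= 1 ->
  exists I J : nat,
    [/\ (I < J <= n)%N, `|x * n%:R - I%:R| <= 1 & `|y * n%:R - J%:R| <= 1].
Proof.
move=> n_gt0 x_ge0 lt_xy y_le1.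
have n_pos : 0 < n%:R :> R by rewrite ltr0n.
have lt_xyn : x * n%:R < y * n%:R by rewrite ltr_pM2r.
have le_yn : y * n%:R <= n%:R by nra.
have /andP[I_le I_gt] := truncn_itv (mulr_ge0 x_ge0 (ltW n_pos)).
have /andP[J_le J_gt] := truncn_itv (mulr_ge0 (le_trans x_ge0 (ltW lt_xy)) (ltW n_pos)).
set I := Num.truncn (x * n%:R) in I_le I_gt *.
set J := Num.truncn (y * n%:R) in J_le J_gt *.
have lt_In : (I < n)%N by rewrite -(ltr_nat R); lra.
have le_Jn : (J <= n)%N by rewrite -(ler_nat R); lra.
move: I_gt J_gt; rewrite -!natr1 => I_gt J_gt.
have I_near : `|x * n%:R - I%:R| <= 1 by rewrite ler_norml; lra.
case: (leqP I.+1 J) => [le_IJ | lt_JI].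
  exists I, J; split => //; first by rewrite le_IJ.
  by rewrite ler_norml; lra.
exists I, I.+1; rewrite ltnSn lt_In; split => //.
move: lt_JI; rewrite ltnS -(ler_nat R) -natr1 => le_JI.
by rewrite ler_norml; lra.
Qed.

Lemma affmap_lerp_sub (R : realType) (L1 U1 L2 U2 s1 t1 s2 t2 x : R) :
  U1 - L1 != 0 -> t1 - s1 != 0 ->
  let lam := (x - lerp L1 U1 s1) / ((t1 - s1) * (U1 - L1)) in
  affmap L1 U1 L2 U2 x -
    affmap (lerp L1 U1 s1) (lerp L1 U1 t1) (lerp L2 U2 s2) (lerp L2 U2 t2) x =
  (U2 - L2) * ((1 - lam) * (s1 - s2) + lam * (t1 - t2)).
Proof.
move=> d1_neq0 d_neq0 lam; rewrite /affmap.
have -> : lerp L1 U1 t1 - lerp L1 U1 s1 = (t1 - s1) * (U1 - L1) by rewrite /lerp; ring.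
by rewrite /lam /lerp; field; rewrite d1_neq0 d_neq0.
Qed.

Lemma close_on_affmap_lerp (R : realType) (eps L1 U1 L2 U2 s1 t1 s2 t2 : R) :
  L1 < U1 -> L2 <= U2 -> U2 - L2 <= 1 -> s1 < t1 ->
  `|s1 - s2| < eps -> `|t1 - t2| < eps ->
  close_on eps (affmap L1 U1 L2 U2)
    (affmap (lerp L1 U1 s1) (lerp L1 U1 t1) (lerp L2 U2 s2) (lerp L2 U2 t2))
    L1 U1 (lerp L1 U1 s1) (lerp L1 U1 t1).
Proof.
move=> lt_LU1 le_LU2 d2_le1 lt_st1 s_near t_near x _ /andP[x_ge x_le].
have d1_gt0 : 0 < U1 - L1 by rewrite subr_gt0.
have d_gt0 : 0 < t1 - s1 by rewrite subr_gt0.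
rewrite affmap_lerp_sub ?gt_eqF //.
set lam := (x - lerp L1 U1 s1) / _.
have lam_itv : 0 <= lam <= 1.
  have den_gt0 : 0 < (t1 - s1) * (U1 - L1) by rewrite mulr_gt0.
  rewrite /lam divr_ge0 ?subr_ge0 ?(ltW den_gt0) //= ler_pdivrMr // mul1r.
  by move: x_le; rewrite /lerp; lra.
rewrite normrM ger0_norm ?subr_ge0 //.
apply: le_lt_trans (convex_norm_lt lam_itv s_near t_near).
by rewrite ler_piMl.
Qed.

Lemma within1_natr_div (R : realFieldType) (n a b : nat) (eps : R) :
  (0 < n)%N -> n%:R^-1 < eps -> within1 a b -> `|a%:R / n%:R - b%:R / n%:R| < eps.
Proof.
move=> n_gt0 n_inv_lt /andP[le_ab le_ba]; apply: (dist_lt_of_scaled n_gt0 n_inv_lt).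
rewrite !divfK ?pnatr_eq0 -?lt0n // ler_norml.
by move: le_ab le_ba; rewrite -!(ler_nat R) -!natr1; lra.
Qed.

Definition cycle_rel (m : nat) : rel 'I_m := fun x y => (val y == (val x).+1 %% m)%N.
Arguments cycle_rel : clear implicits.

Lemma cycle_rel_dcycle m : (0 < m)%N -> is_dcycle (cycle_rel m).
Proof. by move=> m_gt0; exists m, id; split => //; split => //; exists id. Qed.

Section Lift.

Variables (R : realType) (T : finType) (e : rel T) (phiL phiU : T -> R) (eps : R).
Hypotheses (phiL01 : in01 phiL) (phiU01 : in01 phiU) (lt_phiLU : forall g, phiL g < phiU g).
Variables (k : nat) (c : 'I_k -> T) (c' : T -> 'I_k).
Hypotheses (k_gt0 : (0 < k)%N) (cK : cancel c c') (c'K : cancel c' c).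
Hypothesis e_cycle : forall i j : 'I_k, e (c i) (c j) = (val j == (val i).+1 %% k)%N.
Variables (n N : nat).
Hypotheses (n_gt0 : (0 < n)%N) (n_inv_lt : n%:R^-1 < eps) (lt_len_N : (walk_len n < N)%N).

Let N_gt0 : (0 < N)%N := leq_ltn_trans (leq0n _) lt_len_N.

Definition lift_proj (j : 'I_(N * k)) : T := c (Ordinal (ltn_pmod j k_gt0)).
(* Once [j] has wound [walk_len n] times around [G] the walk stays at its starting
   point, so the lift closes up consistently for every [N > walk_len n]. *)
Definition lift_time (j : 'I_(N * k)) : nat := minn (j %/ k) (walk_len n).
Definition lift_lo (j : 'I_(N * k)) : R := (walk_lo n (lift_time j))%:R / n%:R.
Definition lift_hi (j : 'I_(N * k)) : R := (walk_hi n (lift_time j))%:R / n%:R.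
Definition lift_phiL (j : 'I_(N * k)) : R :=
  lerp (phiL (lift_proj j)) (phiU (lift_proj j)) (lift_lo j).
Definition lift_phiU (j : 'I_(N * k)) : R :=
  lerp (phiL (lift_proj j)) (phiU (lift_proj j)) (lift_hi j).

Lemma lift_proj_hom : edge_hom (cycle_rel (N * k)) e lift_proj.
Proof.
move=> x y /eqP y_eq; rewrite /lift_proj e_cycle /= y_eq modn_dvdm ?dvdn_mull //.
by rewrite -addn1 -modnDml addn1.
Qed.

Lemma lift_proj_at (r : nat) (i : 'I_k) (lt_r : (r * k + i < N * k)%N) :
  lift_proj (Ordinal lt_r) = c i.
Proof. by rewrite /lift_proj; congr c; apply: val_inj; rewrite /= modnMDl modn_small. Qed.

Lemma lift_time_at (r : nat) (i : 'I_k) (lt_r : (r * k + i < N * k)%N) :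
  (r <= walk_len n)%N -> lift_time (Ordinal lt_r) = r.
Proof. by move=> le_r; rewrite /lift_time /= divnMDl // divn_small // addn0; apply/minn_idPl. Qed.

Lemma lift_lo_hi_itv j : [/\ 0 <= lift_lo j, lift_lo j < lift_hi j & lift_hi j <= 1].
Proof.
have n_pos : 0 < n%:R :> R by rewrite ltr0n.
rewrite /lift_lo /lift_hi divr_ge0 ?ler0n // ltr_pM2r ?invr_gt0 // ltr_nat walk_lo_lt_hi.
by rewrite ler_pdivrMr // mul1r ler_nat walk_hi_le.
Qed.

Lemma lift_phi_itv j :
  [/\ phiL (lift_proj j) <= lift_phiL j, lift_phiL j < lift_phiU j
    & lift_phiU j <= phiU (lift_proj j)].
Proof. by have [*] := lift_lo_hi_itv j; apply: lerp_itv. Qed.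

Lemma lift_phi01 : in01 lift_phiL /\ in01 lift_phiU.
Proof.
split=> j; have [? ? ?] := lift_phi_itv j;
by have /andP[? ?] := phiL01 (lift_proj j); have /andP[? ?] := phiU01 (lift_proj j); lra.
Qed.

Lemma lift_phi_exact g : exists j, [/\ lift_proj j = g, lift_phiL j = phiL g & lift_phiU j = phiU g].
Proof.
have lt_g := ltn_mul_add N_gt0 (ltn_ord (c' g)).
exists (Ordinal lt_g); rewrite /lift_phiL /lift_phiU /lift_lo /lift_hi.
rewrite lift_proj_at lift_time_at // c'K; have [-> ->] := walk_start n_gt0 (dvdn0 _).
by rewrite mul0r divff ?pnatr_eq0 -?lt0n // lerp0 lerp1.
Qed.

Lemma phi_width_le1 g : phiU g - phiL g <= 1.
Proof. by have /andP[? ?] := phiL01 g; have /andP[? ?] := phiU01 g; lra. Qed.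

Lemma lift_phi_approx g a b : phiL g <= a -> a < b -> b <= phiU g ->
  exists j, [/\ lift_proj j = g, `|a - lift_phiL j| < eps & `|b - lift_phiU j| < eps].
Proof.
move=> le_a lt_ab le_b; set L := phiL g in le_a *; set U := phiU g in le_b *.
have lt_LU : L < U := lt_phiLU g.
have d_gt0 : 0 < U - L by rewrite subr_gt0.
have d_le1 : U - L <= 1 := phi_width_le1 g.
pose rel x := (x - L) / (U - L).
have relK x : lerp L U (rel x) = x by rewrite /lerp /rel divfK ?gt_eqF // addrC subrK.
have near x (K : nat) : `|x * n%:R - K%:R| <= 1 -> `|lerp L U x - lerp L U (K%:R / n%:R)| < eps.
  move=> x_near; rewrite distr_lerp ?(ltW lt_LU) //.
  apply: le_lt_trans (ler_piMr (normr_ge0 _) d_le1) _.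
  by apply: (dist_lt_of_scaled n_gt0 n_inv_lt); rewrite divfK // pnatr_eq0 -lt0n.
have rel_a_ge0 : 0 <= rel a by rewrite /rel divr_ge0 ?subr_ge0 // ltW.
have rel_lt : rel a < rel b by rewrite /rel ltr_pM2r ?invr_gt0 // ltrD2r.
have rel_b_le1 : rel b <= 1 by rewrite /rel ler_pdivrMr // mul1r lerD2r.
have [I [J [IJ_itv near_a near_b]]] := grid_pair_approx n_gt0 rel_a_ge0 rel_lt rel_b_le1.
have [r lt_r [lo_r hi_r]] := walk_onto n_gt0 IJ_itv.
have lt_j := ltn_mul_add (ltn_trans lt_r lt_len_N) (ltn_ord (c' g)).
exists (Ordinal lt_j); rewrite /lift_phiL /lift_phiU /lift_lo /lift_hi.
rewrite lift_proj_at lift_time_at ?(ltnW lt_r) // c'K lo_r hi_r.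
split => //; first by rewrite -[a in `|a - _|]relK near.
by rewrite -[b in `|b - _|]relK near.
Qed.

Lemma lift_edge_near x y : cycle_rel (N * k) x y ->
  `|lift_lo x - lift_lo y| < eps /\ `|lift_hi x - lift_hi y| < eps.
Proof.
move=> /eqP y_eq; rewrite /lift_lo /lift_hi /lift_time y_eq.
have [lo0 hi0] := walk_start n_gt0 (dvdn0 _).
have [lo_len hi_len] := walk_start n_gt0 (dvdnn _).
split; apply: within1_natr_div => //; apply: within1_clamp_cycle k_gt0 lt_len_N _ _ (ltn_ord x).
- exact: walk_lo_step.
- by rewrite lo0 lo_len.
- exact: walk_hi_step.
- by rewrite hi0 hi_len.
Qed.

Lemma lift_affmap_close x y : cycle_rel (N * k) x y ->
  let g1 := lift_proj x in let g2 := lift_proj y in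
  close_on eps (affmap (phiL g1) (phiU g1) (phiL g2) (phiU g2))
               (affmap (lift_phiL x) (lift_phiU x) (lift_phiL y) (lift_phiU y))
               (phiL g1) (phiU g1) (lift_phiL x) (lift_phiU x) /\
  close_on eps (affmap (phiL g2) (phiU g2) (phiL g1) (phiU g1))
               (affmap (lift_phiL y) (lift_phiU y) (lift_phiL x) (lift_phiU x))
               (phiL g2) (phiU g2) (lift_phiL y) (lift_phiU y).
Proof.
move=> xy g1 g2; have [lo_near hi_near] := lift_edge_near xy.
have [_ lt_x _] := lift_lo_hi_itv x; have [_ lt_y _] := lift_lo_hi_itv y.
split; apply: close_on_affmap_lerp; rewrite ?(ltW (lt_phiLU _)) ?phi_width_le1 //.
by rewrite distrC.
by rewrite distrC.
Qed.

Lemma lift_props_hold :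
  lift_props e phiL phiU eps (cycle_rel (N * k)) lift_proj lift_phiL lift_phiU.
Proof.
split; first by apply: cycle_rel_dcycle; rewrite muln_gt0 N_gt0.
split; first by move=> g; have [j [? _ _]] := lift_phi_exact g; exists j.
split; first exact: lift_proj_hom.
split; first exact: lift_phi01.1.
split; first exact: lift_phi01.2.
split; first by move=> j; have [? ? ?] := lift_phi_itv j.
split; first by move=> g; have [j [? ? ?]] := lift_phi_exact g; exists j.
split; first by move=> g a b le_a lt_ab le_b; have [j [? ? ?]] := lift_phi_approx le_a lt_ab le_b; exists j.
exact: lift_affmap_close.
Qed.

Lemma card_lift : #|'I_(N * k)| = (N * #|T|)%N.
Proof. by rewrite card_ord -(bij_eq_card (Bijective cK c'K)) card_ord. Qed.

End Lift.

Theorem lemma8p2 (R : realType) (T : finType) (e : rel T)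
  (phiL phiU : T -> R) (eps : R) :
  is_dcycle e -> in01 phiL -> in01 phiU ->
  (forall g, phiL g < phiU g) -> 0 < eps ->
  (exists (T' : finType) (e' : rel T') (Psi : T' -> T) (phiL' phiU' : T' -> R),
      lift_props e phiL phiU eps e' Psi phiL' phiU') /\
  (exists m0 : nat, forall m : nat, (m0 <= m)%N ->
     exists (T' : finType) (e' : rel T') (Psi : T' -> T) (phiL' phiU' : T' -> R),
       lift_props e phiL phiU eps e' Psi phiL' phiU' /\ #|T'| = (m * #|T|)%N).
Proof.
case=> k [c [k_gt0 [[c' cK c'K] e_cycle]]] phiL01 phiU01 lt_phiLU eps_gt0.
pose n := (Num.truncn eps^-1).+1.
have eps_inv_gt0 : 0 < eps^-1 by rewrite invr_gt0.
have n_inv_lt : n%:R^-1 < eps.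
  have /andP[_ lt_n] := truncn_itv (ltW eps_inv_gt0).
  by rewrite -[eps]invrK ltf_pV2 ?posrE ?invr_gt0 ?ltr0n.
have lift N : (walk_len n < N)%N ->
    exists (T' : finType) (e' : rel T') (Psi : T' -> T) (phiL' phiU' : T' -> R),
      lift_props e phiL phiU eps e' Psi phiL' phiU' /\ #|T'| = (N * #|T|)%N.
  move=> lt_len_N; exists 'I_(N * k), (cycle_rel (N * k)), (lift_proj c k_gt0 (N:=N)).
  exists (lift_phiL phiL phiU c k_gt0 n (N:=N)), (lift_phiU phiL phiU c k_gt0 n (N:=N)).
  by split; [exact: lift_props_hold | exact: card_lift].
split; last by exists (walk_len n).+1.
by have [T' [e' [Psi [phiL' [phiU' [props _]]]]]] := lift _ (ltnSn _); exists T', e', Psi, phiL', phiU'.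
Qed.
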